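(* Let $T>0$, $c>0$, let $U\subseteq\mathbb{R}^k$, and let $f:[0,T]\times\mathbb{R}^n\times U\to\mathbb{R}^n$ be continuous and continuously differentiable in its second argument. Let $\|\cdot\|$ be a norm on $\mathbb{R}^n$ with dual norm $\|\cdot\|_\star$. Consider the system $\dot x(t)=f(t,x(t),u(t))$ and its adjoint (costate) system $\dot\lambda(t)=-D_xf(t,x(t),u(t))^\top\lambda(t)-v(t)$ on $[0,T]$, with inputs $x(t)\in\mathbb{R}^n$, $u(t)\in U$, $v(t)\in\mathbb{R}^n$, and let $\Lambda^{\leftarrow}(t)=\lambda(T-t)$ be the time-reversed costate, which satisfies $\dot{\Lambda}^{\leftarrow}(t)=D_xf(T-t,x(T-t),u(T-t))^\top\Lambda^{\leftarrow}(t)+v(T-t)$. The following are equivalent: (i) the $x$-system is strongly infinitesimally contracting with respect to $\|\cdot\|$ with rate $c$, i.e. for all $t\in[0,T]$ and $\tilde u\in U$, the one-sided Lipschitz constant of $x\mapsto f(t,x,\tilde u)$ with respect to $\|\cdot\|$ is at most $-c$; (ii) the $\Lambda^{\leftarrow}$-system is strongly infinitesimally contracting with respect to $\|\cdot\|_\star$ with rate $c$, i.e. for all $t\in[0,T]$, $\xi\in\mathbb{R}^n$, $\tilde u\in U$, $w\in\mathbb{R}^n$, the one-sided Lipschitz constant of $\Lambda\mapsto D_xf(T-t,\xi,\tilde u)^\top\Lambda+w$ with respect to $\|\cdot\|_\star$ is at most $-c$.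
   Context: The dual norm is $\|z\|_\star=\sup_{\|y\|\le1}y^\top z$. For a matrix $A$ and a norm $\|\cdot\|$, the induced norm is $\|A\|=\sup_{\|x\|=1}\|Ax\|$ and the logarithmic norm is $\mu(A)=\lim_{h\to0^+}(\|I_n+hA\|-1)/h$. For a continuously differentiable $F:\mathbb{R}^n\to\mathbb{R}^n$, its one-sided Lipschitz constant with respect to a norm is $\sup_{x\in\mathbb{R}^n}\mu(DF(x))$, with $\mu$ computed in that norm. *)

From HB Require Import structures.
From mathcomp Require Import all_boot all_order all_algebra.
From mathcomp Require Import all_classical all_reals all_analysis.
Set Implicit Arguments. Unset Strict Implicit. Unset Printing Implicit Defensive.
Import Order.TTheory GRing.Theory Num.Theory.
Import numFieldNormedType.Exports.
Local Open Scope classical_set_scope.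
Local Open Scope ring_scope.

Section Defs.
Variables (R : realType) (n : nat).

Definition is_norm (N : 'cV[R]_n -> R) : Prop :=
  [/\ (forall x, N x = 0 -> x = 0),
      (forall (a : R) x, N (a *: x) = `|a| * N x) &
      (forall x y, N (x + y) <= N x + N y)].

Definition dual_norm (N : 'cV[R]_n -> R) (z : 'cV[R]_n) : R :=
  sup [set (y^T *m z) 0 0 | y in [set y | N y <= 1]].

Definition induced_norm (N : 'cV[R]_n -> R) (A : 'M[R]_n) : R :=
  sup [set N (A *m x) | x in [set x | N x = 1]].

Definition log_norm (N : 'cV[R]_n -> R) (A : 'M[R]_n) : R :=
  lim ((fun h : R => (induced_norm N (1%:M + h *: A) - 1) / h) @ at_right 0).

Definition jacob (F : 'cV[R]_n -> 'cV[R]_n) (x : 'cV[R]_n) : 'M[R]_n :=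
  \matrix_(i, j) ('D_(delta_mx j 0) F x) i 0.

Definition osL (N : 'cV[R]_n -> R) (F : 'cV[R]_n -> 'cV[R]_n) : \bar R :=
  ereal_sup [set (log_norm N (jacob F x))%:E | x in [set: 'cV[R]_n]].

End Defs.

From HB Require Import structures.
From mathcomp Require Import all_boot all_order all_algebra.
From mathcomp Require Import all_classical all_reals all_analysis.
From mathcomp Require Import lra.
Import Order.TTheory GRing.Theory Num.Theory.
Import numFieldNormedType.Exports.
Local Open Scope classical_set_scope.
Local Open Scope ring_scope.
Set Implicit Arguments. Unset Strict Implicit. Unset Printing Implicit Defensive.

(* The costate field L |-> A^T L + w is affine with Jacobian A^T, so its
   one-sided Lipschitz constant for the dual norm is the log norm of A^T for
   the dual norm.  That log norm equals mu(A), because the induced norms satisfy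
   ||B^T||_* = ||B||: the inequality <= is immediate, and >= comes from the
   bidual formula ||x|| = max_{||z||_* <= 1} z^T x, i.e. from finite
   dimensional Hahn-Banach.  Hahn-Banach is obtained by shaving the norm, one
   direction at a time, down to a sublinear minorant that is linear along every
   basis vector.  Equivalence with the max norm (compactness of its unit
   sphere) makes every supremum involved finite.  Since t |-> T - t maps
   [0, T] onto itself, both conditions say mu(D_x f(t, x, u)) <= -c for all
   t, x, u. *)

Section Sublinear.
Variables (R : realType) (n : nat).
Implicit Types (p q : 'cV[R]_n -> R) (x y d e : 'cV[R]_n).

Definition sublinear p :=
  (forall x y, p (x + y) <= p x + p y) /\
  (forall (a : R) x, 0 < a -> p (a *: x) = a * p x).

(* Together with subadditivity this forces [p (- d) = - p d], i.e. [p] is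
   linear on the line spanned by [d]. *)
Definition linear_along p d := p d + p (- d) <= 0.

Lemma sublinear0 p : sublinear p -> p 0 = 0.
Proof.
move=> [_ hZ]; have two_gt0 : 0 < 2 :> R by lra.
by have := hZ 2 0 two_gt0; rewrite scaler0; lra.
Qed.

Lemma sublinearZ p a x : sublinear p -> 0 <= a -> p (a *: x) = a * p x.
Proof.
move=> hp; rewrite le_eqVlt => /orP[/eqP<-|a_gt0]; last exact: hp.2.
by rewrite scale0r mul0r sublinear0.
Qed.

Section LinearAlong.
Variables (q : 'cV[R]_n -> R) (d : 'cV[R]_n).
Hypotheses (hq : sublinear q) (qd : linear_along q d).

Lemma linear_alongN : q (- d) = - q d.
Proof.
have := hq.1 d (- d); rewrite addrN sublinear0 //.
by move: qd; rewrite /linear_along => qd0 h; lra.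
Qed.

Lemma linear_alongD x : q (x + d) = q x + q d.
Proof.
apply/eqP; rewrite eq_le hq.1 /=.
by have := hq.1 (x + d) (- d); rewrite addrK linear_alongN; lra.
Qed.

Lemma linear_alongZ a : q (a *: d) = a * q d.
Proof.
have [a_ge0|a_lt0] := leP 0 a; first exact: sublinearZ.
rewrite -[a]opprK scaleNr -scalerN sublinearZ ?oppr_ge0 ?ltW //.
by rewrite linear_alongN mulrNN opprK.
Qed.

Lemma linear_alongZr a : linear_along q (a *: d).
Proof. by rewrite /linear_along -scaleNr !linear_alongZ mulNr addrN. Qed.

End LinearAlong.

Lemma linear_along_coord q y : sublinear q ->
  (forall i, linear_along q (delta_mx i 0)) ->
  q y = ((\col_i q (delta_mx i 0))^T *m y) 0 0.
Proof.
move=> hq hlin.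
have -> : ((\col_i q (delta_mx i 0))^T *m y) 0 0 =
          \sum_i q (y i 0 *: delta_mx i 0).
  by rewrite mxE; apply: eq_bigr => i _; rewrite !mxE linear_alongZ // mulrC.
rewrite {1}(matrix_sum_delta y); under eq_bigr do rewrite big_ord1.
apply: (big_rec2 (fun a b => q a = b)); first exact: sublinear0.
by move=> i a b _ <-; rewrite addrC linear_alongD 1?addrC //; exact: linear_alongZr.
Qed.

(* The one-dimensional step of the Hahn-Banach construction; the infimum is
   bounded below by [- p (- x)]. *)
Definition hb_step p e x :=
  inf [set p (x + t *: e) - t * p e | t in [set t : R | 0 <= t]].

Section HBStep.
Variables (p : 'cV[R]_n -> R) (e : 'cV[R]_n).
Hypothesis hp : sublinear p.

Lemma hb_step_lbound x t : 0 <= t -> - p (- x) <= p (x + t *: e) - t * p e.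
Proof.
move=> t_ge0; rewrite -(sublinearZ _ hp t_ge0).
by have := hp.1 (x + t *: e) (- x); rewrite [x + _]addrC addrK; lra.
Qed.

Lemma hb_step_le x t : 0 <= t -> hb_step p e x <= p (x + t *: e) - t * p e.
Proof.
move=> t_ge0; apply: ge_inf; last by exists t.
by exists (- p (- x)) => _ [s s_ge0 <-]; exact: hb_step_lbound.
Qed.

Lemma ge_hb_step x b :
  (forall t, 0 <= t -> b <= p (x + t *: e) - t * p e) -> b <= hb_step p e x.
Proof.
move=> hb; apply: lb_le_inf => [|_ [t t_ge0 <-]]; last exact: hb.
by exists (p (x + 0 *: e) - 0 * p e); exists 0; rewrite /= ?lexx.
Qed.

Lemma hb_step_le_self x : hb_step p e x <= p x.
Proof. by have := hb_step_le x (lexx 0); rewrite scale0r addr0 mul0r subr0. Qed.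

Lemma hb_stepD x y : hb_step p e (x + y) <= hb_step p e x + hb_step p e y.
Proof.
have split_le s t : 0 <= s -> 0 <= t -> hb_step p e (x + y) <=
    (p (x + s *: e) - s * p e) + (p (y + t *: e) - t * p e).
  move=> s_ge0 t_ge0; apply: le_trans (hb_step_le _ (addr_ge0 s_ge0 t_ge0)) _.
  have := hp.1 (x + s *: e) (y + t *: e).
  rewrite addrACA -scalerDl mulrDl; lra.
suff : hb_step p e (x + y) - hb_step p e x <= hb_step p e y by lra.
apply: ge_hb_step => t t_ge0.
suff : hb_step p e (x + y) - (p (y + t *: e) - t * p e) <= hb_step p e x by lra.
by apply: ge_hb_step => s s_ge0; have := split_le s t s_ge0 t_ge0; lra.
Qed.

Lemma hb_stepZ_ge (a : R) x : 0 < a -> a * hb_step p e x <= hb_step p e (a *: x).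
Proof.
move=> a_gt0; apply: ge_hb_step => t t_ge0.
have ta_ge0 : 0 <= t / a by rewrite divr_ge0 // ltW.
have -> : a *: x + t *: e = a *: (x + (t / a) *: e).
  by rewrite scalerDr scalerA mulrCA divff ?gt_eqF // mulr1.
have -> : t * p e = a * (t / a * p e) by rewrite mulrA mulrCA divff ?gt_eqF ?mulr1.
by rewrite hp.2 // -mulrBr ler_pM2l //; exact: hb_step_le.
Qed.

Lemma hb_step_sublinear : sublinear (hb_step p e).
Proof.
split; first exact: hb_stepD.
move=> a x a_gt0; apply/eqP; rewrite eq_le hb_stepZ_ge // andbT.
have ia_gt0 : 0 < a^-1 by rewrite invr_gt0.
have := hb_stepZ_ge (a *: x) ia_gt0.
by rewrite scalerA mulVf ?gt_eqF // scale1r -(ler_pM2l a_gt0) mulrA divff ?gt_eqF ?mul1r.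
Qed.

Lemma hb_step_linear_along : linear_along (hb_step p e) e.
Proof.
have := hb_step_le (- e) ler01; rewrite scale1r addNr sublinear0 // mul1r sub0r.
by have := hb_step_le_self e; rewrite /linear_along; lra.
Qed.

Lemma hb_step_at_dir : hb_step p e e = p e.
Proof.
apply/eqP; rewrite eq_le hb_step_le_self /=; apply: ge_hb_step => t t_ge0.
have -> : e + t *: e = (1 + t) *: e by rewrite scalerDl scale1r.
by rewrite sublinearZ ?addr_ge0 // mulrDl mul1r addrK.
Qed.

End HBStep.

Lemma linear_along_minorant p q d : sublinear q -> (forall x, q x <= p x) ->
  linear_along p d -> linear_along q d /\ q d = p d.
Proof.
move=> hq qp pd; have := qp d; have := qp (- d).
have := hq.1 d (- d); rewrite addrN sublinear0 //; move: pd; rewrite /linear_along.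
by split; [lra | apply/eqP; rewrite eq_le; apply/andP; split; lra].
Qed.

Definition hb_iter p (s : seq 'cV[R]_n) := foldl hb_step p s.

Lemma hb_iter_sublinear s p : sublinear p -> sublinear (hb_iter p s).
Proof. by elim: s p => //= e s IH p hp; exact/IH/hb_step_sublinear. Qed.

Lemma hb_iter_le s p x : sublinear p -> hb_iter p s x <= p x.
Proof.
elim: s p => //= e s IH p hp.
exact: le_trans (IH _ (hb_step_sublinear e hp)) (hb_step_le_self e hp x).
Qed.

Lemma hb_iter_linear_along s p e : sublinear p -> e \in s ->
  linear_along (hb_iter p s) e.
Proof.
elim: s p => // e' s IH p hp; rewrite in_cons => /orP[/eqP->|]; last first.
  exact/IH/hb_step_sublinear.
have hq := hb_step_sublinear e' hp.
by have [] := linear_along_minorant (hb_iter_sublinear s hq)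
  (fun x => hb_iter_le s x hq) (hb_step_linear_along e' hp).
Qed.

Lemma hahn_banach p v : sublinear p ->
  exists z : 'cV[R]_n, (forall y, (z^T *m y) 0 0 <= p y) /\ (z^T *m v) 0 0 = p v.
Proof.
move=> hp; pose q := hb_iter p (v :: [seq delta_mx i 0 | i <- enum 'I_n]).
have hq : sublinear q by exact: hb_iter_sublinear.
have q_lin i : linear_along q (delta_mx i 0).
  apply: hb_iter_linear_along; rewrite // inE.
  by rewrite (map_f (fun i => delta_mx i 0)) ?orbT ?mem_enum.
exists (\col_i q (delta_mx i 0)); split => [y|]; rewrite -linear_along_coord //.
  exact: hb_iter_le.
have hv := hb_step_sublinear v hp.
have [_ ->] : linear_along q v /\ q v = hb_step p v v.
  apply: linear_along_minorant; first exact: hb_iter_sublinear.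
    by move=> x; rewrite /q /=; exact: hb_iter_le.
  exact: hb_step_linear_along.
exact: hb_step_at_dir.
Qed.

End Sublinear.

Lemma mx_norm_entry_le (R : realType) m n (A : 'M[R]_(m, n)) i j : `|A i j| <= `|A|.
Proof.
rewrite [leRHS]/Num.Def.normr /= mx_normrE.
exact: (le_bigmax 0 (fun ij : 'I_m * 'I_n => `|A ij.1 ij.2|) (i, j)).
Qed.

Section Norm.
Variables (R : realType) (n : nat) (N : 'cV[R]_n -> R).
Hypothesis hN : is_norm N.

Lemma is_norm0 : N 0 = 0.
Proof. by case: hN => _ hZ _; have := hZ 0 0; rewrite scale0r normr0 mul0r. Qed.

Lemma is_normN x : N (- x) = N x.
Proof. by case: hN => _ hZ _; rewrite -scaleN1r hZ normrN normr1 mul1r. Qed.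

Lemma is_norm_ge0 x : 0 <= N x.
Proof.
case: hN => _ _ hD; have := hD x (- x).
by rewrite addrN is_norm0 is_normN; lra.
Qed.

Lemma is_norm_sublinear : sublinear N.
Proof. by case: hN => _ hZ hD; split=> // a x a_gt0; rewrite hZ gtr0_norm. Qed.

Lemma is_norm_normalize y : N y != 0 -> N ((N y)^-1 *: y) = 1.
Proof.
by case: hN => _ hZ _ y_neq0; rewrite hZ ger0_norm ?invr_ge0 ?is_norm_ge0 ?mulVf.
Qed.

Lemma is_norm_dist x y : `|N x - N y| <= N (x - y).
Proof.
case: hN => _ _ hD; rewrite ler_norml; apply/andP; split.
  by have := hD (y - x) x; rewrite subrK -opprB is_normN; lra.
by have := hD (x - y) y; rewrite subrK; lra.
Qed.

Lemma is_norm_le_coord y : N y <= \sum_i `|y i 0| * N (delta_mx i 0).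
Proof.
case: hN => _ hZ hD; rewrite {1}(matrix_sum_delta y).
under eq_bigr do rewrite big_ord1.
apply: (big_rec2 (fun a b => N a <= b)); first by rewrite is_norm0.
by move=> i a b _ hab; apply: le_trans (hD _ _) _; rewrite hZ lerD2l.
Qed.

Lemma is_norm_continuous_rV : continuous (fun r : 'rV[R]_n => N r^T).
Proof.
pose M := \sum_i N (delta_mx i 0).
have M_ge0 : 0 <= M by apply: sumr_ge0 => i _; exact: is_norm_ge0.
have N_le r : N r^T <= M * `|r|.
  apply: le_trans (is_norm_le_coord _) _; rewrite /M mulr_suml.
  apply: ler_sum => i _; rewrite mulrC ler_wpM2l ?is_norm_ge0 // mxE.
  exact: mx_norm_entry_le.
have M1_gt0 : 0 < M + 1 by lra.
move=> r; apply/(@cvgrPdist_lt _ _ _ (nbhs r) (nbhs_filter r)) => e e_gt0.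
apply/(@nbhs_normP R ('rV[R]_n : pseudoMetricNormedZmodType R)).
exists (e / (M + 1)); first by rewrite /= divr_gt0.
move=> s /=; rewrite ltr_pdivlMr // => rs_lt.
apply: le_lt_trans (is_norm_dist _ _) _; rewrite -linearB /=.
apply: le_lt_trans (N_le _) _; apply: le_lt_trans rs_lt.
by rewrite mulrC ler_wpM2l // lerDl.
Qed.

(* Equivalence with the max norm: [N] is bounded below on the compact unit
   sphere of the max norm, where it attains a positive minimum. *)
Lemma is_norm_ge_mxnorm : exists2 m, 0 < m & forall y, m * `|y^T| <= N y.
Proof.
case: hN => N_eq0 hZ _.
pose S := [set r : 'rV[R]_n | `|r| = 1].
have normalize_in_S (r : 'rV[R]_n) : r != 0 -> S (`|r|^-1 *: r).
  by move=> r_neq0; rewrite /S /= normrZ ger0_norm ?invr_ge0 // mulVf ?normr_eq0.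
have [S_ne|S0] := pselect (S !=set0); last first.
  exists 1 => // y; suff -> : y = 0 by rewrite trmx0 normr0 mulr0 is_norm0.
  apply: contra_notP S0 => /eqP; rewrite -trmx_eq0 => /normalize_in_S Sy.
  by exists (`|y^T|^-1 *: y^T).
have S_compact : compact S.
  apply: bounded_closed_compact.
    by exists 1; split => // M M_gt1 r Sr; rewrite /= Sr ltW.
  apply: (@preimage_closed _ _ (@Num.Def.normr R _) [set x : R | x = 1]).
    by move=> x _; exact: norm_continuous.
  exact: closed_eq.
have [c Sc c_min] :=
  EVT_min_rV S_ne S_compact (continuous_subspaceT is_norm_continuous_rV).
have c_neq0 : c != 0.
  apply/eqP => c0; move/set_mem: Sc; rewrite /S /= c0 normr0.
  by move=> /esym/eqP; rewrite oner_eq0.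
exists (N c^T).
  rewrite lt_neqAle is_norm_ge0 andbT eq_sym.
  by apply: contra c_neq0 => /eqP/N_eq0/eqP; rewrite trmx_eq0.
move=> y; have [->|y_neq0] := eqVneq y 0; first by rewrite trmx0 normr0 mulr0 is_norm0.
have yT_gt0 : 0 < `|y^T| by rewrite normr_gt0 trmx_eq0.
have yT_neq0 : y^T != 0 by rewrite trmx_eq0.
rewrite -ler_pdivlMr // mulrC.
have := c_min _ (mem_set (normalize_in_S _ yT_neq0)).
by rewrite linearZ /= trmxK hZ ger0_norm ?invr_ge0.
Qed.

Lemma is_norm_coord_le :
  exists2 C, 0 < C & forall (y : 'cV[R]_n) i, `|y i 0| <= C * N y.
Proof.
have [m m_gt0 hm] := is_norm_ge_mxnorm; exists m^-1; first by rewrite invr_gt0.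
move=> y i; rewrite -(ler_pM2l m_gt0) mulrA mulfV ?gt_eqF // mul1r.
apply: le_trans (hm y); rewrite ler_pM2l //.
by have := mx_norm_entry_le y^T 0 i; rewrite mxE.
Qed.

Lemma is_norm_mulmx_le (B : 'M[R]_n) : exists K, forall x, N (B *m x) <= K * N x.
Proof.
have [C C_gt0 hC] := is_norm_coord_le.
exists (\sum_i (\sum_j `|B i j| * C) * N (delta_mx i 0)) => x.
apply: le_trans (is_norm_le_coord _) _; rewrite mulr_suml; apply: ler_sum => i _.
rewrite mulrAC ler_wpM2r ?is_norm_ge0 // mxE mulr_suml.
apply: le_trans (ler_norm_sum _ _ _) _; apply: ler_sum => j _.
by rewrite normrM -mulrA ler_wpM2l.
Qed.

End Norm.

Section Dotmx.
Variables (R : comNzRingType) (n : nat).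
Implicit Types y z : 'cV[R]_n.

Lemma dotmxE y z : (y^T *m z) 0 0 = \sum_i y i 0 * z i 0.
Proof. by rewrite mxE; apply: eq_bigr => i _; rewrite mxE. Qed.

Lemma dotmxC y z : (y^T *m z) 0 0 = (z^T *m y) 0 0.
Proof. by rewrite !dotmxE; apply: eq_bigr => i _; rewrite mulrC. Qed.

Lemma dotmx_deltal i z : ((delta_mx i 0 : 'cV[R]_n)^T *m z) 0 0 = z i 0.
Proof. by rewrite trmx_delta -rowE mxE. Qed.

End Dotmx.

Section DualNorm.
Variables (R : realType) (n : nat) (N : 'cV[R]_n -> R).
Hypothesis hN : is_norm N.
Implicit Types y z : 'cV[R]_n.

Lemma dual_norm_has_sup z :
  has_sup [set (y^T *m z) 0 0 | y in [set y | N y <= 1]].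
Proof.
have [C C_gt0 hC] := is_norm_coord_le hN.
split; first by exists (((0 : 'cV[R]_n)^T *m z) 0 0); exists 0; rewrite //= is_norm0.
exists (\sum_i C * `|z i 0|) => _ [y /= Ny_le1 <-]; rewrite dotmxE.
apply: ler_sum => i _; apply: le_trans (ler_norm _) _; rewrite normrM ler_wpM2r //.
by apply: le_trans (hC y i) _; rewrite -[leRHS]mulr1 ler_pM2l.
Qed.

Lemma dual_norm_ub y z : N y <= 1 -> (y^T *m z) 0 0 <= dual_norm N z.
Proof. by move=> Ny_le1; apply: (sup_upper_bound (dual_norm_has_sup z)); exists y. Qed.

Lemma dual_norm_le z b :
  (forall y, N y <= 1 -> (y^T *m z) 0 0 <= b) -> dual_norm N z <= b.
Proof.
move=> hb; apply: ge_sup => [|_ [y Ny_le1 <-]]; last exact: hb.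
by case: (dual_norm_has_sup z).
Qed.

Lemma dual_norm_ge0 z : 0 <= dual_norm N z.
Proof. by have := @dual_norm_ub 0 z; rewrite is_norm0 // trmx0 mul0mx mxE; apply. Qed.

Lemma dotmx_le_dual_norm y z : (y^T *m z) 0 0 <= dual_norm N z * N y.
Proof.
have [Ny0|Ny_neq0] := eqVneq (N y) 0.
  by case: hN => N_eq0 _ _; rewrite Ny0 mulr0 (N_eq0 _ Ny0) trmx0 mul0mx mxE.
have Ny_gt0 : 0 < N y by rewrite lt_neqAle eq_sym Ny_neq0 is_norm_ge0.
rewrite -ler_pdivrMr //; have := @dual_norm_ub ((N y)^-1 *: y) z.
by rewrite is_norm_normalize // lexx linearZ /= -scalemxAl mxE mulrC; apply.
Qed.

Lemma normr_dotmx_le y z : `|(y^T *m z) 0 0| <= dual_norm N z * N y.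
Proof.
rewrite ler_norml dotmx_le_dual_norm andbT lerNl.
by have := dotmx_le_dual_norm (- y) z; rewrite is_normN // linearN /= mulNmx mxE.
Qed.

Lemma dual_normZ_le (a : R) z : dual_norm N (a *: z) <= `|a| * dual_norm N z.
Proof.
apply: dual_norm_le => y Ny_le1; rewrite -scalemxAr mxE.
apply: le_trans (ler_norm _) _; rewrite normrM ler_wpM2l //.
apply: le_trans (normr_dotmx_le y z) _.
by rewrite -[leRHS]mulr1 ler_wpM2l ?dual_norm_ge0.
Qed.

Lemma dual_normZ (a : R) z : dual_norm N (a *: z) = `|a| * dual_norm N z.
Proof.
apply/eqP; rewrite eq_le dual_normZ_le /=.
have [->|a_neq0] := eqVneq a 0; first by rewrite normr0 mul0r dual_norm_ge0.
rewrite -ler_pdivlMl ?normr_gt0 // -normrV ?unitfE //.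
by rewrite -[X in dual_norm N X](scale1r z) -(mulVf a_neq0) -scalerA dual_normZ_le.
Qed.

Lemma dual_normD z1 z2 : dual_norm N (z1 + z2) <= dual_norm N z1 + dual_norm N z2.
Proof.
apply: dual_norm_le => y Ny_le1; rewrite mulmxDr mxE.
by apply: lerD; exact: dual_norm_ub.
Qed.

Lemma dual_norm_eq0 z : dual_norm N z = 0 -> z = 0.
Proof.
move=> z0; apply/matrixP => i j; rewrite (ord1 j) mxE -dotmx_deltal.
apply/normr0_eq0/eqP; rewrite eq_le normr_ge0 andbT.
by have := normr_dotmx_le (delta_mx i 0) z; rewrite z0 mul0r.
Qed.

Lemma dual_norm_is_norm : is_norm (dual_norm N).
Proof. by split; [exact: dual_norm_eq0 | exact: dual_normZ | exact: dual_normD]. Qed.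

Lemma dual_norm_attained v : exists z, dual_norm N z <= 1 /\ (v^T *m z) 0 0 = N v.
Proof.
have [z [z_le z_v]] := hahn_banach v (is_norm_sublinear hN).
exists z; split; last by rewrite dotmxC.
by apply: dual_norm_le => y Ny_le1; rewrite dotmxC; exact: le_trans (z_le y) Ny_le1.
Qed.

End DualNorm.

Section InducedNorm.
Variables (R : realType) (n : nat) (N : 'cV[R]_n -> R).
Hypothesis hN : is_norm N.
Implicit Type B : 'M[R]_n.

Lemma induced_norm_has_ub B : has_ubound [set N (B *m x) | x in [set x | N x = 1]].
Proof.
have [K hK] := is_norm_mulmx_le hN B.
by exists K => _ [x Nx1 <-]; have := hK x; rewrite Nx1 mulr1.
Qed.

Lemma induced_norm_mul_le B x : N (B *m x) <= induced_norm N B * N x.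
Proof.
have [Nx0|Nx_neq0] := eqVneq (N x) 0.
  by case: hN => N_eq0 _ _; rewrite Nx0 mulr0 (N_eq0 _ Nx0) mulmx0 is_norm0.
have Nx_gt0 : 0 < N x by rewrite lt_neqAle eq_sym Nx_neq0 is_norm_ge0.
have Nx1 := is_norm_normalize hN Nx_neq0.
rewrite -ler_pdivrMr //; apply: sup_upper_bound.
  split; last exact: induced_norm_has_ub.
  by exists (N (B *m ((N x)^-1 *: x))); exists ((N x)^-1 *: x).
exists ((N x)^-1 *: x) => //; case: hN => _ hZ _.
by rewrite -scalemxAr hZ ger0_norm ?invr_ge0 ?is_norm_ge0 // mulrC.
Qed.

Lemma induced_norm_ge0 B : 0 <= induced_norm N B.
Proof.
rewrite /induced_norm; set S := [set _ | _ in _].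
have [S0|/set0P[s Ss]] := eqVneq S set0; first by rewrite S0 sup0.
have S_sup : has_sup S by split; [exists s | exact: induced_norm_has_ub].
apply: le_trans (sup_upper_bound S_sup Ss).
by case: Ss => x _ <-; exact: is_norm_ge0.
Qed.

Lemma induced_norm_le B K : 0 <= K ->
  (forall x, N (B *m x) <= K * N x) -> induced_norm N B <= K.
Proof.
move=> K_ge0 hK; rewrite /induced_norm; set S := [set _ | _ in _].
have [S0|/set0P S_ne] := eqVneq S set0; first by rewrite S0 sup0.
by apply: ge_sup => // _ [x Nx1 <-]; have := hK x; rewrite Nx1 mulr1.
Qed.

End InducedNorm.

Lemma induced_norm_dual_tr (R : realType) n (N : 'cV[R]_n -> R) (B : 'M[R]_n) :
  is_norm N -> induced_norm (dual_norm N) B^T = induced_norm N B.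
Proof.
move=> hN; have hN' := dual_norm_is_norm hN.
apply/eqP; rewrite eq_le; apply/andP; split; apply: induced_norm_le => //.
- exact: induced_norm_ge0.
- move=> z; apply: dual_norm_le => // y Ny_le1.
  rewrite mulmxA -trmx_mul; apply: le_trans (dotmx_le_dual_norm hN _ _) _.
  rewrite mulrC ler_wpM2r ?dual_norm_ge0 //.
  apply: le_trans (induced_norm_mul_le hN _ _) _.
  by rewrite -[leRHS]mulr1 ler_wpM2l ?induced_norm_ge0.
- exact: induced_norm_ge0.
- move=> x; have [w [w_le1 <-]] := dual_norm_attained hN (B *m x).
  rewrite trmx_mul -mulmxA; apply: le_trans (dotmx_le_dual_norm hN _ _) _.
  rewrite ler_wpM2r ?is_norm_ge0 //.
  apply: le_trans (induced_norm_mul_le hN' _ _) _.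
  by rewrite -[leRHS]mulr1 ler_wpM2l ?induced_norm_ge0.
Qed.

Lemma log_norm_dual_tr (R : realType) n (N : 'cV[R]_n -> R) (A : 'M[R]_n) :
  is_norm N -> log_norm (dual_norm N) A^T = log_norm N A.
Proof.
move=> hN; rewrite /log_norm.
suff -> : (fun h : R => (induced_norm (dual_norm N) (1%:M + h *: A^T) - 1) / h) =
          (fun h : R => (induced_norm N (1%:M + h *: A) - 1) / h) by [].
apply/funext => h; rewrite -(@induced_norm_dual_tr _ _ N _ hN).
by rewrite linearD /= linearZ /= tr_scalar_mx.
Qed.

Lemma jacob_affine (R : realType) n (A : 'M[R]_n) (w x : 'cV[R]_n) :
  jacob (fun y => A *m y + w) x = A.
Proof.
apply/matrixP => i j; rewrite mxE.
have -> : 'D_(delta_mx j 0) (fun y => A *m y + w) x = A *m delta_mx j 0.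
  apply: lim_near_cst; first exact: norm_hausdorff.
  near=> h; rewrite /= mulmxDr -scalemxAr -[_ *: _ + _ + w]addrA addrK.
  rewrite scalerA mulVf ?scale1r //.
  by near: h; exact: nbhs_dnbhs_neq.
by rewrite -colE mxE.
Unshelve. all: by end_near.
Qed.

Lemma osL_dual_affine (R : realType) n (N : 'cV[R]_n -> R) (A : 'M[R]_n)
    (w : 'cV[R]_n) :
  is_norm N -> osL (dual_norm N) (fun y => A^T *m y + w) = (log_norm N A)%:E.
Proof.
move=> hN; rewrite /osL -[RHS]ereal_sup1; congr ereal_sup.
apply/seteqP; split => [_ [x _ <-]|_ ->] /=.
  by rewrite jacob_affine log_norm_dual_tr.
by exists 0 => //; rewrite jacob_affine log_norm_dual_tr.
Qed.

Theorem theorem3 (R : realType) (n k : nat) (T c : R)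
  (U : set 'cV[R]_k) (f : R -> 'cV[R]_n -> 'cV[R]_k -> 'cV[R]_n)
  (N : 'cV[R]_n -> R) :
  0 < T -> 0 < c ->
  (* f continuous on [0,T] x R^n x U *)
  {within `[0, T] `*` [set: 'cV[R]_n] `*` U,
     continuous (fun p : R * 'cV[R]_n * 'cV[R]_k => f p.1.1 p.1.2 p.2)} ->
  (* f continuously differentiable in its second argument *)
  (forall t x u, t \in `[0, T] -> u \in U -> differentiable (f t ^~ u) x) ->
  {within `[0, T] `*` [set: 'cV[R]_n] `*` U,
     continuous (fun p : R * 'cV[R]_n * 'cV[R]_k =>
                   jacob (f p.1.1 ^~ p.2) p.1.2)} ->
  is_norm N ->
  (forall t u, t \in `[0, T] -> u \in U ->
     (osL N (fun x => f t x u) <= (- c)%:E)%E)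
  <->
  (forall t (xi : 'cV[R]_n) u (w : 'cV[R]_n), t \in `[0, T] -> u \in U ->
     (osL (dual_norm N)
        (fun L => (jacob (f (T - t)%R ^~ u) xi)^T *m L + w)%R <= (- c)%:E)%E).
Proof.
move=> _ _ _ _ _ hN.
have reflect_in t : t \in `[0, T] -> T - t \in `[0, T].
  by rewrite !in_itv /= => /andP[? ?]; apply/andP; split; lra.
split=> [H t xi u w tT uU|H t u tT uU].
  rewrite osL_dual_affine //; apply: le_trans (H _ _ (reflect_in _ tT) uU).
  by apply: ereal_sup_ubound; exists xi.
apply: ge_ereal_sup => _ [x _ <-].
have := H (T - t) x u 0 (reflect_in _ tT) uU.
by rewrite opprB addrC subrK osL_dual_affine.
Qed.
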